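(* Let $\mathcal{F}=\mathcal{B}(K_3)$. Then $R_3(\mathcal{F},2)=R_3(\mathcal{F},3)=5$, $R_3(\mathcal{F},4)=6$, $R_3(\mathcal{F},5)=7$, $R_3(\mathcal{F},6)=8$, and $R_3(\mathcal{F},8)=9$.
   Context: For a graph $G$, a hypergraph $H$ is a Berge-$G$ hypergraph if there are an injective map $\phi:V(G)\to V(H)$ and pairwise distinct hyperedges $e_{xy}\in E(H)$, one for each $xy\in E(G)$, with $\phi(x),\phi(y)\in e_{xy}$. $\mathcal{B}(G)$ denotes the family of all Berge-$G$ hypergraphs. $K_n^r$ denotes the complete $r$-uniform hypergraph on $n$ vertices. For a family $\mathcal{H}$ of $r$-uniform hypergraphs and integers $k\ge 2$, $r\ge 2$, the Ramsey number $R_r(\mathcal{H},k)$ is the smallest integer $n$ such that every coloring of the hyperedges of $K_n^r$ with $k$ colors contains a monochromatic subhypergraph belonging to $\mathcal{H}$. *)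

From mathcomp Require Import all_boot.
Set Implicit Arguments. Unset Strict Implicit. Unset Printing Implicit Defensive.

(* A (simple) graph G on a finite vertex type V is given by its edge set:
   a set of 2-element subsets of V.
   A hypergraph H on vertex type W is given by its edge set E : {set {set W}}. *)

Definition is_BergeG (V : finType) (GE : {set {set V}})
  (W : finType) (E : {set {set W}}) : Prop :=
  exists (phi : V -> W) (f : {set V} -> {set W}),
    injective phi /\
    {in GE &, injective f} /\
    (forall xy, xy \in GE -> f xy \in E /\ forall x, x \in xy -> phi x \in f xy).

Definition K3_edges : {set {set 'I_3}} := [set e : {set 'I_3} | #|e| == 2].

Definition complete_hyperedges (n r : nat) : {set {set 'I_n}} :=
  [set e : {set 'I_n} | #|e| == r].

(* A colour class
   (the set of hyperedges of a given colour) contains a subhypergraph in B(G)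
   iff it is itself Berge-G (Berge-G only requires the hyperedges e_xy to be
   among the edges). *)
Definition ramsey_prop (V : finType) (GE : {set {set V}}) (r k n : nat) : Prop :=
  forall c : {set 'I_n} -> 'I_k,
    exists i : 'I_k,
      exists E : {set {set 'I_n}},
        E \subset [set e in complete_hyperedges n r | c e == i] /\
        is_BergeG GE E.

Definition is_ramsey_number (V : finType) (GE : {set {set V}}) (r k N : nat) : Prop :=
  ramsey_prop GE r k N /\ forall m, m < N -> ~ ramsey_prop GE r k m.

From mathcomp Require Import all_boot zify.
From Stdlib Require Import Classical.
Set Implicit Arguments. Unset Strict Implicit. Unset Printing Implicit Defensive.

(* A 3-uniform hypergraph on n vertices without a Berge
   triangle has at most n^2/8 hyperedges (Gyori).  Call a pair inside a
   hyperedge e private if no other hyperedge contains it.  Two non-private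
   pairs of e through a common vertex would close a Berge triangle with e, so
   e has two private pairs sharing a vertex; keep them.  The kept pairs form a
   graph with at least 2|E| edges which is triangle-free: a triangle of kept
   pairs from three distinct hyperedges is a Berge triangle, and by privacy
   two of its sides can only come from the same hyperedge if all three do.
   Mantel's theorem bounds that graph by n^2/4 edges.  Hence when
   k n^2 < 8 C(n,3), some colour class of any k-colouring of the triples has
   more than n^2/8 triples and thus a Berge triangle; this covers
   (k, n) = (2,5), (3,5), (4,6), (5,7), (6,8), (8,9).

   Lower bounds.  Explicit colourings of the triples of n - 1 vertices,
   checked by computation to contain no monochromatic Berge triangle. *)

Section Card3.
Variable T : finType.
Implicit Types (e : {set T}) (a b c : T).

Lemma card3_split e a b : #|e| = 3 -> a != b -> [set a; b] \subset e ->
  exists2 x, x \notin [set a; b] & e = x |: [set a; b].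
Proof.
move=> e3 ab ab_e.
have /cards1P [x ex] : #|e :\: [set a; b]| == 1.
  by rewrite cardsD (setIidPr ab_e) cards2 ab e3.
have : x \in e :\: [set a; b] by rewrite ex set11.
rewrite inE => /andP [xNab _]; exists x => //.
by rewrite -[LHS](setID e [set a; b]) (setIidPr ab_e) ex setUC.
Qed.

Lemma card3_eq e a b c : #|e| = 3 -> a != b -> b != c -> a != c ->
  a \in e -> b \in e -> c \in e -> e = a |: [set b; c].
Proof.
move=> e3 ab bc ac ae be ce; apply/eqP; rewrite eq_sym eqEcard e3.
rewrite cardsU1 !inE negb_or ab ac cards2 bc leqnn andbT.
by apply/subsetP => x; rewrite !inE => /or3P [] /eqP ->.
Qed.

End Card3.

Lemma leq_sum_uniq (I : finType) (r : seq I) (F : I -> nat) :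
  uniq r -> \sum_(i <- r) F i <= \sum_i F i.
Proof. by move=> r_uniq; rewrite big_uniq // [X in _ <= X](bigID [in r]) leq_addr. Qed.

Lemma sum_sq_le (T : finType) (F : T -> nat) :
  (\sum_u F u) ^ 2 <= #|T| * \sum_u F u ^ 2.
Proof.
rewrite -(leq_pmul2l (isT : 0 < 2)).
have -> : (\sum_u F u) ^ 2 = \sum_u \sum_v F u * F v.
  by rewrite -mulnn big_distrl; apply: eq_bigr => u _; rewrite big_distrr.
have -> : 2 * (#|T| * \sum_u F u ^ 2) = \sum_u \sum_v (F u ^ 2 + F v ^ 2).
  symmetry; under eq_bigr do rewrite big_split /=.
  rewrite big_split /= mul2n -addnn; congr (_ + _).
    by rewrite big_distrr; apply: eq_bigr => u _; rewrite sum_nat_const.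
  by rewrite sum_nat_const.
rewrite big_distrr; apply: leq_sum => u _; rewrite big_distrr; apply: leq_sum => v _.
exact: (nat_Cauchy _ _).1.
Qed.

Lemma leq4_sum_cherry (T : finType) (F : rel T) w u v :
  uniq [:: w; u; v] -> F w u -> F w v -> F u w -> F v w ->
  4 <= \sum_i \sum_j (F i j : nat).
Proof.
move=> wuv Fwu Fwv Fuw Fvw.
have row i j : F i j -> 1 <= \sum_k (F i k : nat).
  move=> Fij; apply: leq_trans (leq_sum_uniq _ (isT : uniq [:: j])).
  by rewrite big_cons big_nil Fij.
have row_w : 2 <= \sum_k (F w k : nat).
  apply: leq_trans (leq_sum_uniq _ (_ : uniq [:: u; v])); last by case/andP: wuv.
  by rewrite !big_cons big_nil Fwu Fwv.
apply: leq_trans (leq_sum_uniq _ wuv); rewrite !big_cons big_nil addn0.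
by rewrite -[4]/(2 + (1 + 1)) !leq_add // (row _ w).
Qed.

Section Mantel.
Variables (T : finType) (G : rel T).
Hypothesis G_sym : symmetric G.
Hypothesis G_triangle_free : forall u v w, G u v -> G v w -> G u w -> False.

Let deg u := \sum_v (G u v : nat).

Lemma deg_add_le u v : G u v -> deg u + deg v <= #|T|.
Proof.
move=> Guv; rewrite -big_split -sum1_card /=; apply: leq_sum => w _.
case Guw: (G u w); case Gvw: (G v w) => //=.
by case: (G_triangle_free Guw _ Guv); rewrite G_sym.
Qed.

Lemma sum_deg_sq_le : 2 * \sum_u deg u ^ 2 <= #|T| * \sum_u deg u.
Proof.
have sq_l : \sum_u deg u ^ 2 = \sum_u \sum_v G u v * deg u.
  by apply: eq_bigr => u _; rewrite -mulnn big_distrl.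
have sq_r : \sum_u deg u ^ 2 = \sum_u \sum_v G u v * deg v.
  rewrite exchange_big; apply: eq_bigr => v _; rewrite -mulnn big_distrl.
  by apply: eq_bigr => u _; rewrite G_sym.
rewrite mul2n -addnn {1}sq_l sq_r -big_split big_distrr; apply: leq_sum => u _.
rewrite -big_split big_distrr; apply: leq_sum => v _ /=.
by case Guv: (G u v); rewrite ?mul1n ?muln1 ?deg_add_le.
Qed.

Theorem mantel : 2 * \sum_u \sum_v (G u v : nat) <= #|T| ^ 2.
Proof.
change (2 * \sum_u deg u <= #|T| ^ 2).
have := sum_sq_le deg; have := sum_deg_sq_le.
set M := \sum_u deg u; set S := \sum_u deg u ^ 2 => deg_sq_le sq_le.
have : M * (2 * M) <= M * #|T| ^ 2 by nia.
case: (posnP M) => [M0|M_gt0]; first by rewrite M0.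
by rewrite leq_pmul2l.
Qed.
End Mantel.

Definition berge_triangle (W : finType) (E : {set {set W}}) (a b c : W)
    (e1 e2 e3 : {set W}) : Prop :=
  [/\ [/\ a != b, b != c & a != c], [/\ e1 != e2, e2 != e3 & e1 != e3],
      [/\ e1 \in E, e2 \in E & e3 \in E] &
      [/\ [set a; b] \subset e1, [set b; c] \subset e2 & [set a; c] \subset e3]].

Local Notation o0 := (@Ordinal 3 0 isT).
Local Notation o1 := (@Ordinal 3 1 isT).
Local Notation o2 := (@Ordinal 3 2 isT).

Lemma ord3P (i : 'I_3) : [\/ i = o0, i = o1 | i = o2].
Proof.
by case: i => -[|[|[|//]]] ?; [apply: Or31 | apply: Or32 | apply: Or33]; apply: val_inj.
Qed.

Lemma K3_edgesP s : s \in K3_edges ->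
  [\/ s = [set o0; o1], s = [set o1; o2] | s = [set o0; o2]].
Proof.
rewrite inE => /cards2P [x [y [xy ->]]].
case: (ord3P x) (ord3P y) xy => -> [] -> // _.
all: first [by apply: Or31 | by apply: Or32 | by apply: Or33 | rewrite setUC].
all: first [by apply: Or31 | by apply: Or32 | by apply: Or33].
Qed.

Lemma BergeK3_of_triangle (W : finType) (E : {set {set W}}) a b c e1 e2 e3 :
  berge_triangle E a b c e1 e2 e3 -> is_BergeG K3_edges E.
Proof.
case=> [[ab bc ac] [e12 e23 e13] [E1 E2 E3]].
rewrite !subUset !sub1set => -[/andP [a1 b1] /andP [b2 c2] /andP [a3 c3]].
pose f (s : {set 'I_3}) := if o2 \notin s then e1 else if o0 \notin s then e2 else e3.
have [f01 f12 f02] : [/\ f [set o0; o1] = e1, f [set o1; o2] = e2 & f [set o0; o2] = e3].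
  by rewrite /f !inE.
exists (fun i : 'I_3 => nth a [:: a; b; c] i), f; split; [|split].
- move=> i j /eqP; rewrite nth_uniq ?ltn_ord //= ?inE ?negb_or ?ab ?ac ?bc //.
  by move/eqP/val_inj.
- move=> s t /K3_edgesP [] -> /K3_edgesP [] ->; rewrite ?f01 ?f12 ?f02 // => e_eq;
    by move: e12 e23 e13; rewrite e_eq !eqxx.
- move=> s /K3_edgesP [] ->; rewrite ?f01 ?f12 ?f02;
    by split=> // x; rewrite !inE => /orP [] /eqP ->.
Qed.

Lemma triangle_of_BergeK3 (W : finType) (E : {set {set W}}) :
  is_BergeG K3_edges E -> exists a b c e1 e2 e3, berge_triangle E a b c e1 e2 e3.
Proof.
move=> [phi [f [phi_inj [f_inj f_edge]]]].
have K01 : [set o0; o1] \in K3_edges by rewrite inE cards2.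
have K12 : [set o1; o2] \in K3_edges by rewrite inE cards2.
have K02 : [set o0; o2] \in K3_edges by rewrite inE cards2.
have neq (s t : {set 'I_3}) x : x \in s -> x \notin t -> s != t.
  by move=> xs; apply: contraNneq => <-.
exists (phi o0), (phi o1), (phi o2), (f [set o0; o1]), (f [set o1; o2]), (f [set o0; o2]).
split; first by rewrite !(inj_eq phi_inj).
- rewrite !(inj_in_eq f_inj) //; split;
    by [apply: (neq _ _ o0); rewrite !inE | apply: (neq _ _ o1); rewrite !inE].
- by split; apply f_edge.
- have f_mem xy x : xy \in K3_edges -> x \in xy -> phi x \in f xy.
    by move=> /f_edge [_]; apply.
  by split; apply/subsetP => _ /set2P [] ->; apply: f_mem; rewrite // !inE eqxx ?orbT.
Qed.

Lemma is_BergeG_subset (V W : finType) (GE : {set {set V}}) (E F : {set {set W}}) :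
  E \subset F -> is_BergeG GE E -> is_BergeG GE F.
Proof.
move=> EF [phi [f [phi_inj [f_inj f_edge]]]]; exists phi, f; do 2 split=> //.
by move=> xy /f_edge [fE f_mem]; split=> //; apply: (subsetP EF).
Qed.

Section Gyori.
Variables (T : finType) (E : {set {set T}}).
Hypothesis E_card3 : {in E, forall e : {set T}, #|e| = 3}.
Hypothesis E_triangle_free : forall a b c e1 e2 e3, ~ berge_triangle E a b c e1 e2 e3.
Implicit Types (e : {set T}) (u v w x y z : T).

Definition private_pair e u v := [forall e' in E, (u \in e') && (v \in e') ==> (e' == e)].

Definition all_pairs_private e :=
  [forall u in e, forall v in e, (u != v) ==> private_pair e u v].

(* When all three pairs of e are private, only the two through the vertex
   [pick x in e] are kept, so the kept pairs of one hyperedge never form a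
   triangle. *)
Definition kept_pair e u v := [&& u != v, u \in e, v \in e, private_pair e u v &
  all_pairs_private e ==> ([pick x in e] \in [:: Some u; Some v])].

Definition kept_graph : rel T := fun u v => [exists e in E, kept_pair e u v].

Lemma private_pairC e u v : private_pair e u v = private_pair e v u.
Proof. by apply: eq_forallb => e'; rewrite andbC. Qed.

Lemma private_pairP e u v e' :
  private_pair e u v -> e' \in E -> u \in e' -> v \in e' -> e' = e.
Proof. by move=> /forall_inP uv_e e'E ue' ve'; apply/eqP/(implyP (uv_e _ e'E)); rewrite ue'. Qed.

Lemma private_pair_at e u v w : e \in E -> u \in e -> v \in e -> w \in e ->
  u != v -> v != w -> u != w -> private_pair e u w || private_pair e v w.
Proof.
move=> eE ue ve we uv vw uw; apply/norP.
case=> /forall_inPn [e1 e1E]; rewrite negb_imply => /andP [/andP [ue1 we1] e1e].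
case/forall_inPn=> [e2 e2E]; rewrite negb_imply => /andP [/andP [ve2 we2] e2e].
have [e12|e12] := eqVneq e1 e2.
  subst e2; move: e1e.
  by rewrite (card3_eq (E_card3 e1E) uv vw uw) // -(card3_eq (E_card3 eE)) ?eqxx.
apply: (E_triangle_free (a := u) (b := w) (c := v) (e1 := e1) (e2 := e2) (e3 := e)).
have wv : w != v by rewrite eq_sym.
by split; rewrite ?subUset ?sub1set ?ue1 ?we1 ?ve2 ?we2 ?ue ?ve ?eE ?e1E ?e2E //; split.
Qed.

Lemma kept_pairC e u v : kept_pair e u v = kept_pair e v u.
Proof.
rewrite /kept_pair eq_sym private_pairC !mem_seq2 [(_ == Some v) || _]orbC.
by case: (u \in e); case: (v \in e).
Qed.

Lemma kept_pair_private e u v : kept_pair e u v -> private_pair e u v.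
Proof. by case/and5P. Qed.

Lemma kept_pairs_no_triangle e x y z : e \in E ->
  kept_pair e x y -> kept_pair e y z -> kept_pair e x z -> False.
Proof.
move=> eE /and5P [xy xe ye pxy kxy] /and5P [yz _ ze pyz kyz] /and5P [xz _ _ pxz kxz].
have e_xyz := card3_eq (E_card3 eE) xy yz xz xe ye ze.
have all_private : all_pairs_private e.
  apply/forall_inP => u; rewrite {1}e_xyz !inE => /or3P [] /eqP ->;
  apply/forall_inP => v; rewrite {1}e_xyz !inE => /or3P [] /eqP ->;
  by rewrite ?eqxx ?pxy ?pyz ?pxz ?implybT // private_pairC ?pxy ?pyz ?pxz ?implybT.
move: kxy kyz kxz; rewrite all_private /= !mem_seq2.
case: [pick _ in e] => // p; rewrite !(inj_eq (@Some_inj _)).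
move=> /orP [] /eqP ? /orP [] /eqP ? /orP [] /eqP ?; subst.
all: by move: xy yz xz; rewrite !eqxx.
Qed.

Lemma kept_graph_sym : symmetric kept_graph.
Proof. by move=> u v; apply: eq_existsb => e; rewrite kept_pairC. Qed.

Lemma kept_graph_triangle_free u v w :
  kept_graph u v -> kept_graph v w -> kept_graph u w -> False.
Proof.
move=> /exists_inP [e1 e1E k1] /exists_inP [e2 e2E k2] /exists_inP [e3 e3E k3].
move: (k1) (k2) (k3) => /and5P [uv ue1 ve1 _ _] /and5P [vw ve2 we2 _ _] /and5P [uw ue3 we3 _ _].
have [e12|e12] := eqVneq e1 e2.
  subst e2; have e31 := private_pairP (kept_pair_private k3) e1E ue1 we2; subst e3.
  exact: kept_pairs_no_triangle e1E k1 k2 k3.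
have [e23|e23] := eqVneq e2 e3.
  subst e3; have e12' := private_pairP (kept_pair_private k1) e2E ue3 ve2.
  by rewrite e12' eqxx in e12.
have [e13|e13] := eqVneq e1 e3.
  subst e3; have e21 := private_pairP (kept_pair_private k2) e1E ve1 we3.
  by rewrite e21 eqxx in e12.
apply: (E_triangle_free (a := u) (b := v) (c := w) (e1 := e1) (e2 := e2) (e3 := e3)).
by split; rewrite ?subUset ?sub1set ?ue1 ?ve1 ?ve2 ?we2 ?ue3 ?we3 ?e1E ?e2E ?e3E //; split.
Qed.

Lemma kept_pairI e w u : w != u -> w \in e -> u \in e -> private_pair e w u ->
  (all_pairs_private e -> [pick x in e] = Some w) -> kept_pair e w u.
Proof.
move=> wu we ue pwu apex; apply/and5P; split=> //; apply/implyP => /apex ->.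
by rewrite mem_head.
Qed.

Lemma all_pairs_privateP e :
  reflect {in e &, forall u v, u != v -> private_pair e u v} (all_pairs_private e).
Proof.
apply: (iffP forall_inP) => [all_e u v ue ve | all_e u ue].
  by move/forall_inP: (all_e u ue) => /(_ v ve) /implyP.
by apply/forall_inP => v ve; apply/implyP; apply: all_e.
Qed.

Definition kept_cherry e :=
  exists w u v, [/\ uniq [:: w; u; v], kept_pair e w u & kept_pair e w v].

Lemma kept_cherry_all_private e : e \in E -> all_pairs_private e -> kept_cherry e.
Proof.
move=> eE all_private; have e3 := E_card3 eE.
case def_w: [pick x in e] => [w|]; last first.
  by move: def_w; case: pickP => // /eq_card0; rewrite e3.
have we : w \in e by move: def_w; case: pickP => // x xe [<-].
have /cards2P [u [v [uv e_w]]] : #|e :\ w| == 2.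
  by move: e3; rewrite (cardsD1 w) we add1n => -[->].
have /setD1P [uw ue] : u \in e :\ w by rewrite e_w !inE eqxx.
have /setD1P [vw ve] : v \in e :\ w by rewrite e_w !inE eqxx orbT.
have private_e := all_pairs_privateP _ all_private.
exists w, u, v; rewrite /= !inE negb_or ![w == _]eq_sym uw vw uv.
by split=> //; apply: kept_pairI; rewrite // 1?eq_sym // private_e // eq_sym.
Qed.

Lemma kept_cherry_not_all_private e : e \in E -> ~~ all_pairs_private e -> kept_cherry e.
Proof.
move=> eE; rewrite negb_forall_in => /exists_inP [u ue].
rewrite negb_forall_in => /exists_inP [v ve]; rewrite negb_imply => /andP [uv not_uv].
have uv_e : [set u; v] \subset e by rewrite subUset !sub1set ue ve.
have [w wuv e_wuv] := card3_split (E_card3 eE) uv uv_e.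
move: wuv; rewrite !inE negb_or => /andP [wu wv].
have we : w \in e by rewrite e_wuv setU11.
have kept_w x : x \in e -> x != w -> private_pair e w x -> kept_pair e w x.
  move=> xe xw pwx; apply: kept_pairI; rewrite // 1?eq_sym // => /all_pairs_privateP.
  by move=> /(_ u v ue ve uv); rewrite (negbTE not_uv).
have p_wu : private_pair e w u.
  have := @private_pair_at e v w u eE ve we ue; rewrite private_pairC (negbTE not_uv).
  by apply; rewrite // eq_sym.
have p_wv : private_pair e w v.
  have := @private_pair_at e u w v eE ue we ve; rewrite (negbTE not_uv).
  by apply; rewrite // eq_sym.
exists w, u, v; rewrite /= !inE negb_or wu wv uv.
by split=> //; apply: kept_w; rewrite // eq_sym.
Qed.

Lemma kept_pairs_ge4 e : e \in E -> 4 <= \sum_u \sum_v (kept_pair e u v : nat).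
Proof.
move=> eE; have [w [u [v [wuv kwu kwv]]]] : kept_cherry e.
  case: (boolP (all_pairs_private e)); first exact: kept_cherry_all_private.
  exact: kept_cherry_not_all_private.
by apply: (leq4_sum_cherry (F := kept_pair e) wuv) => //; rewrite kept_pairC.
Qed.

Lemma sum_kept_pair_le u v : \sum_(e in E) (kept_pair e u v : nat) <= kept_graph u v.
Proof.
case: (boolP (kept_graph u v)) => [/exists_inP [e eE kuv]|not_kept].
  rewrite (bigD1 e) //= kuv big1 // => e' /andP [e'E e'e]; apply/eqP; rewrite eqb0.
  apply: contra e'e => /and5P [_ ue' ve' _ _].
  by rewrite (private_pairP (kept_pair_private kuv) e'E ue' ve').
rewrite big1 // => e eE; apply/eqP; rewrite eqb0; apply: contra not_kept => kuv.
by apply/exists_inP; exists e.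
Qed.

Theorem gyori : 8 * #|E| <= #|T| ^ 2.
Proof.
apply: leq_trans (mantel kept_graph_sym kept_graph_triangle_free).
rewrite -[8]/(2 * 4) -mulnA leq_mul2l /= mulnC -sum_nat_const.
apply: (@leq_trans (\sum_(e in E) \sum_u \sum_v (kept_pair e u v : nat))).
  by apply: leq_sum => e; apply: kept_pairs_ge4.
rewrite exchange_big /=; apply: leq_sum => u _.
rewrite exchange_big /=; apply: leq_sum => v _.
exact: sum_kept_pair_le.
Qed.

End Gyori.

Definition colour_class n k r (c : {set 'I_n} -> 'I_k) (i : 'I_k) :=
  [set e in complete_hyperedges n r | c e == i].

Lemma ramsey_propP (V : finType) (GE : {set {set V}}) r k n :
  ramsey_prop GE r k n <->
  forall c : {set 'I_n} -> 'I_k, exists i, is_BergeG GE (colour_class r c i).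
Proof.
split=> ramsey c; have [i] := ramsey c.
  by move=> [E [E_sub BE]]; exists i; apply: is_BergeG_subset BE.
by exists i, (colour_class r c i).
Qed.

Lemma sum_card_colour_classes n k r (c : {set 'I_n} -> 'I_k) :
  \sum_(i < k) #|colour_class r c i| = 'C(n, r).
Proof.
rewrite -[n in RHS]card_ord -card_draws -sum1_card (partition_big c predT) //=.
by apply: eq_bigr => i _; rewrite -sum1_card; apply: eq_bigl => e; rewrite !inE.
Qed.

Lemma ramsey_K3_of_count k N : k * N ^ 2 < 8 * 'C(N, 3) -> ramsey_prop K3_edges 3 k N.
Proof.
move=> count; apply/ramsey_propP => c; apply: NNPP => no_berge.
have class_small i : 8 * #|colour_class 3 c i| <= N ^ 2.
  rewrite -[N in N ^ 2]card_ord; apply: gyori.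
    by move=> e; rewrite !inE => /andP [/eqP].
  by move=> a b c' e1 e2 e3 /BergeK3_of_triangle B; apply: no_berge; exists i.
have : \sum_(i < k) 8 * #|colour_class 3 c i| <= \sum_(i < k) N ^ 2.
  by apply: leq_sum => i _.
rewrite -big_distrr sum_card_colour_classes sum_nat_const card_ord.
by rewrite leqNgt count.
Qed.

(* A colouring of the triples of 'I_n is given by a table: the colour of the
   triple e is the entry of index [bitmask e]. *)
Definition bitmask n (e : {set 'I_n}) : nat := \sum_(i in e) 2 ^ i.

Definition triple_bitmask (x a b : nat) : nat := 2 ^ x + (2 ^ a + 2 ^ b).

Lemma bitmask_triple n (x a b : 'I_n) : x \notin [set a; b] -> a != b ->
  bitmask (x |: [set a; b]) = triple_bitmask x a b.
Proof. by move=> xab ab; rewrite /bitmask big_setU1 //= big_setU1 ?big_set1 // inE. Qed.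

Definition table_colouring n k (t : seq nat) (e : {set 'I_n}) : 'I_k.+1 :=
  inord (nth 0 t (bitmask e)).

Lemma table_colouringE n k t (e : {set 'I_n}) : all (fun i => i < k.+1) t ->
  table_colouring k t e = nth 0 t (bitmask e) :> nat.
Proof.
move=> t_col; rewrite inordK //; case: (ltnP (bitmask e) (size t)) => [lt_e|ge_e].
  exact: (all_nthP 0 t_col).
by rewrite nth_default.
Qed.

Lemma triple_subsetE n (x a b y p q : 'I_n) :
  (x |: [set a; b] \subset y |: [set p; q]) =
  all [in [:: y : nat; p : nat; q : nat]] [:: x : nat; a : nat; b : nat].
Proof. by rewrite !subUset !sub1set !inE /= !in_cons !in_nil !orbF andbT. Qed.

(* The triples {x,a,b}, {y,b,c}, {z,a,c} form a monochromatic Berge triangle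
   of the table t; [~~ all [in s] s'] says that the triple s' is not s. *)
Definition mono_triangle_at (t : seq nat) (a b c x y z : nat) : bool :=
  [&& uniq [:: a; b; c], x \notin [:: a; b], y \notin [:: b; c], z \notin [:: a; c],
      ~~ all [in [:: y; b; c]] [:: x; a; b],
      ~~ all [in [:: z; a; c]] [:: y; b; c],
      ~~ all [in [:: z; a; c]] [:: x; a; b],
      nth 0 t (triple_bitmask x a b) == nth 0 t (triple_bitmask y b c) &
      nth 0 t (triple_bitmask y b c) == nth 0 t (triple_bitmask z a c)].

Definition mono_triangle_free (n : nat) (t : seq nat) : bool :=
  let V := iota 0 n in
  all (fun a => all (fun b => all (fun c => all (fun x => all (fun y => all (fun z =>
    ~~ mono_triangle_at t a b c x y z) V) V) V) V) V) V.

Lemma not_ramsey_K3_of_table m n k t : m <= n -> all (fun i => i < k.+1) t ->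
  mono_triangle_free n t -> ~ ramsey_prop K3_edges 3 k.+1 m.
Proof.
move=> mn t_col t_free /ramsey_propP /(_ (table_colouring k t)) [i /triangle_of_BergeK3].
move=> [a [b [c [e1 [e2 [e3 [[ab bc ac] [e12 e23 e13] E123 [ab1 bc2 ac3]]]]]]]].
case: E123; rewrite !inE.
move=> /andP [/eqP c1 /eqP col1] /andP [/eqP c2 /eqP col2] /andP [/eqP c3 /eqP col3].
have [x xab def_e1] := card3_split c1 ab ab1.
have [y ybc def_e2] := card3_split c2 bc bc2.
have [z zac def_e3] := card3_split c3 ac ac3.
subst e1 e2 e3.
have colour_triple (u v w : 'I_m) : u \notin [set v; w] -> v != w ->
    table_colouring k t (u |: [set v; w]) = nth 0 t (triple_bitmask u v w) :> nat.
  by move=> uvw vw; rewrite table_colouringE // bitmask_triple.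
have in_V (v : 'I_m) : (v : nat) \in iota 0 n.
  by rewrite mem_iota add0n (leq_trans (ltn_ord v) mn).
move: t_free => /allP/(_ _ (in_V a)) /allP/(_ _ (in_V b)) /allP/(_ _ (in_V c)).
move=> /allP/(_ _ (in_V x)) /allP/(_ _ (in_V y)) /allP/(_ _ (in_V z)) /negP; apply.
move: e12 e23 e13 xab ybc zac; rewrite !eqEcard c1 c2 c3 !leqnn !andbT !triple_subsetE.
rewrite /mono_triangle_at => -> -> -> xab ybc zac.
rewrite -(colour_triple x) // -(colour_triple y) // -(colour_triple z) //.
rewrite col1 col2 col3 !eqxx /=.
have eq_nat (u v : 'I_m) : (u == v :> nat) = (u == v) by [].
move: xab ybc zac; rewrite !inE !negb_or !eq_nat.
by move=> -> -> ->; rewrite ab ac bc.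
Qed.

Lemma ramsey_number_K3 k N t :
  k.+1 * N.+1 ^ 2 < 8 * 'C(N.+1, 3) -> all (fun i => i < k.+1) t -> mono_triangle_free N t ->
  is_ramsey_number K3_edges 3 k.+1 N.+1.
Proof.
move=> count t_col t_free; split; first exact: ramsey_K3_of_count.
by move=> m; rewrite ltnS => mN; apply: not_ramsey_K3_of_table mN t_col t_free.
Qed.

Definition colouring4_2 : seq nat := [:: 0; 0; 0; 0; 0; 0; 0; 0; 0; 0; 0; 1; 0; 0; 1; 0].
Definition colouring5_4 : seq nat := [:: 0; 0; 0; 0; 0; 0; 0; 1; 0; 0; 0; 3; 0; 3; 1; 0; 0; 0; 0; 0; 0; 0; 1; 0; 0; 2; 2; 0; 2; 0; 0; 0].
Definition colouring6_5 : seq nat := [:: 0; 0; 0; 0; 0; 0; 0; 2; 0; 0; 0; 1; 0; 3; 1; 0; 0; 0; 0; 2; 0; 0; 4; 0; 0; 0; 3; 0; 4; 0; 0; 0; 0; 0; 0; 4; 0; 3; 0; 0; 0; 4; 0; 0; 2; 0; 0; 0; 0; 1; 3; 0; 1; 0; 0; 0; 2; 0; 0; 0; 0; 0; 0; 0].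
Definition colouring7_6 : seq nat := [:: 0; 0; 0; 0; 0; 0; 0; 1; 0; 0; 0; 4; 0; 0; 4; 0; 0; 0; 0; 2; 0; 2; 5; 0; 0; 0; 5; 0; 1; 0; 0; 0; 0; 0; 0; 1; 0; 3; 3; 0; 0; 0; 4; 0; 3; 0; 0; 0; 0; 2; 5; 0; 3; 0; 0; 0; 1; 0; 0; 0; 0; 0; 0; 0; 0; 0; 0; 1; 0; 5; 0; 0; 0; 5; 2; 0; 2; 0; 0; 0; 0; 4; 0; 0; 4; 0; 0; 0; 1; 0; 0; 0; 0; 0; 0; 0; 0; 5; 0; 0; 3; 0; 0; 0; 2; 0; 0; 0; 0; 0; 0; 0; 4; 0; 0; 0; 0; 0; 0; 0; 0; 0; 0; 0; 0; 0; 0; 0].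
Definition colouring8_8 : seq nat := [:: 0; 0; 0; 0; 0; 0; 0; 6; 0; 0; 0; 7; 0; 2; 6; 0; 0; 0; 0; 7; 0; 5; 6; 0; 0; 5; 0; 0; 2; 0; 0; 0; 0; 0; 0; 7; 0; 4; 4; 0; 0; 3; 3; 0; 3; 0; 0; 0; 0; 5; 2; 0; 4; 0; 0; 0; 0; 0; 0; 0; 0; 0; 0; 0; 0; 0; 0; 0; 0; 0; 6; 0; 0; 4; 4; 0; 7; 0; 0; 0; 0; 5; 1; 0; 7; 0; 0; 0; 4; 0; 0; 0; 0; 0; 0; 0; 0; 0; 1; 0; 7; 0; 0; 0; 3; 0; 0; 0; 0; 0; 0; 0; 2; 0; 0; 0; 0; 0; 0; 0; 0; 0; 0; 0; 0; 0; 0; 0; 0; 0; 0; 7; 0; 1; 5; 0; 0; 1; 5; 0; 2; 0; 0; 0; 0; 3; 3; 0; 3; 0; 0; 0; 0; 0; 0; 0; 0; 0; 0; 0; 0; 6; 5; 0; 4; 0; 0; 0; 6; 0; 0; 0; 0; 0; 0; 0; 6; 0; 0; 0; 0; 0; 0; 0; 0; 0; 0; 0; 0; 0; 0; 0; 0; 0; 5; 0; 7; 0; 0; 0; 4; 0; 0; 0; 0; 0; 0; 0; 3; 0; 0; 0; 0; 0; 0; 0; 0; 0; 0; 0; 0; 0; 0; 0; 6; 0; 0; 0; 0; 0; 0; 0; 0; 0; 0; 0; 0; 0; 0; 0; 0; 0; 0; 0; 0; 0; 0; 0; 0; 0; 0; 0; 0; 0; 0; 0].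

Theorem theorem1 :
  is_ramsey_number K3_edges 3 2 5 /\
  is_ramsey_number K3_edges 3 3 5 /\
  is_ramsey_number K3_edges 3 4 6 /\
  is_ramsey_number K3_edges 3 5 7 /\
  is_ramsey_number K3_edges 3 6 8 /\
  is_ramsey_number K3_edges 3 8 9.
Proof.
split; [|split; [|split; [|split; [|split]]]].
- by apply: (ramsey_number_K3 (t := colouring4_2)); vm_compute.
- by apply: (ramsey_number_K3 (t := colouring4_2)); vm_compute.
- by apply: (ramsey_number_K3 (t := colouring5_4)); vm_compute.
- by apply: (ramsey_number_K3 (t := colouring6_5)); vm_compute.
- by apply: (ramsey_number_K3 (t := colouring7_6)); vm_compute.
- by apply: (ramsey_number_K3 (t := colouring8_8)); vm_compute.
Qed.
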